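(* For every $n\ge 2$, $\gamma_{\rm i}(P_n^2)\ge 3\lfloor n/8\rfloor$.
   Context: $P_n$ is the path on $n$ vertices and $P_n^2$ its square (same vertex set, two vertices adjacent iff their distance in $P_n$ is $1$ or $2$). Indicated domination game on a graph $G$: two players, Dominator and Staller, alternate. In each round Dominator indicates a vertex $v$ not yet dominated by the vertices previously selected by Staller (a vertex dominates itself and its neighbors), and Staller must select a vertex of the closed neighborhood $N[v]$, adding it to a set $D$. The game ends when $D$ is a dominating set of $G$. Dominator wants to minimize $|D|$ and Staller to maximize it; the size of $D$ under optimal play of both is the indicated domination number $\gamma_{\rm i}(G)$. *)

From mathcomp Require Import all_boot.
Set Implicit Arguments. Unset Strict Implicit. Unset Printing Implicit Defensive.

(* A simple graph on a finite vertex type T is given by a symmetric,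
   irreflexive adjacency relation e : rel T. *)

Definition cnbhd (T : finType) (e : rel T) (v : T) : {set T} :=
  [set u | (u == v) || e v u].

Definition dominated_by (T : finType) (e : rel T) (D : {set T}) : {set T} :=
  \bigcup_(u in D) cnbhd e u.

(* ig_val e k D : the number of further vertices added to D under optimal
   play of the indicated domination game, starting from the position where
   Staller has already selected the set D, with a move budget k.  Otherwise Dominator
   indicates an undominated vertex v (minimising), Staller selects a vertex
   u in N[v] (maximising), u is added to D and the game continues.
   Since every selected u is new (v undominated), the game lasts at most #|T|
   rounds, so budget #|T| from the empty position is never exhausted. *)
Fixpoint ig_val (T : finType) (e : rel T) (k : nat) (D : {set T}) : nat :=
  match k with
  | 0 => 0
  | k'.+1 =>
      if dominated_by e D == setT then 0
      else \big[minn/#|T|]_(v in ~: dominated_by e D)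
             \max_(u in cnbhd e v) (ig_val e k' (u |: D)).+1
  end.

Definition indicated_domination_number (T : finType) (e : rel T) : nat :=
  ig_val e #|T| set0.

Definition path_square_rel (n : nat) : rel 'I_n :=
  fun i j => (i != j) && (i <= j + 2) && (j <= i + 2).

Arguments path_square_rel n : clear implicits.

From mathcomp Require Import all_boot.
From mathcomp Require Import zify.
Set Implicit Arguments. Unset Strict Implicit. Unset Printing Implicit Defensive.

(* Staller keeps a potential from dropping by more than one per round.  The
   potential adds up, over the maximal runs of undominated vertices of P_n^2,
   min(L, (3L + 5 tl + 5 tr) / 8) for a run of length L, where the flag tl
   (resp. tr) says that the run is bounded on the left (resp. right) by a
   dominated vertex rather than by an end of the path.  If Dominator indicates
   a vertex v of a run, Staller selects a vertex u within distance 2 of v.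
   The dominated vertex next to a run is dominated by the vertex of D two
   steps farther out, which also dominates the three vertices beyond it; so u
   changes nothing outside the run, and it splits the run into two shorter
   ones by dominating at most five consecutive positions of it.  Choosing u
   so that the left piece, of length x, has 3x + 5 + 5 tl = 0 or 1 (mod 8)
   loses at most 1 in the middle of long runs; near the ends of a run and in
   runs shorter than 8 explicit choices do the job.  The empty set has
   potential (3n)/8, which bounds the length of the game from below. *)

Definition gap_weight (tl tr : bool) (L : nat) : nat :=
  minn L ((3 * L + 5 * tl + 5 * tr) %/ 8).

Lemma gap_weight0 tl tr : gap_weight tl tr 0 = 0.
Proof. by rewrite /gap_weight min0n. Qed.

Lemma gap_weightC tl tr L : gap_weight tl tr L = gap_weight tr tl L.
Proof. by rewrite /gap_weight addnAC. Qed.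

(* Positions of a run of length L are numbered from 0.  Staller answers
   position p with the vertex at position w - 2, which dominates positions
   w - 4, ..., w and leaves runs of lengths w - 4 and L - w.+1 (truncated
   subtractions).  The two middle conditions keep that vertex in the path. *)
Definition good_response (tl tr : bool) (L p w : nat) : bool :=
  [&& p <= w <= p + 4, tl || (2 <= w), tr || (w <= L + 1) &
      gap_weight tl tr L <=
        gap_weight tl true (w - 4) + gap_weight true tr (L - w.+1) + 1].

Lemma good_response_rev (tl tr : bool) L p w : p < L ->
  good_response tl tr L p w -> good_response tr tl L (L.-1 - p) (L + 3 - w).
Proof.
move=> ltpL /and4P[/andP[lepw lewp] hl hr hw].
apply/and4P; split; [lia | lia | lia |].
have -> : L + 3 - w - 4 = L - w.+1 by lia.
have -> : L - (L + 3 - w).+1 = w - 4 by lia.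
rewrite gap_weightC (gap_weightC tr) (gap_weightC true tl); lia.
Qed.

Lemma good_response_small (tl tr : bool) L p :
  L < 8 -> p < L -> has (good_response tl tr L p) (iota p 5).
Proof.
by case: tl; case: tr; case: L => [|[|[|[|[|[|[|[|L]]]]]]]] //;
  case: p => [|[|[|[|[|[|[|p]]]]]]].
Qed.

Lemma residue_in_window c p : exists2 x, p <= x <= p + 4 & (3 * x + c) %% 8 <= 1.
Proof.
have /hasP[j] : has (fun j => ((3 * p + c) %% 8 + 3 * j) %% 8 <= 1) (iota 0 5).
  by case: ((3 * p + c) %% 8) (ltn_pmod (3 * p + c) (isT : 0 < 8))
    => [|[|[|[|[|[|[|[|r]]]]]]]].
rewrite mem_iota => lej5 hj; exists (p + j); first lia.
by rewrite modnDml addnAC -mulnDr in hj.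
Qed.

Lemma gap_weight_split (tl tr : bool) x z :
  (3 * x + 5 + 5 * tl) %% 8 <= 1 -> (tr -> 0 < z) ->
  gap_weight tl tr (x + 5 + z) <= gap_weight tl true x + gap_weight true tr z + 1.
Proof.
by rewrite /gap_weight => hx; case: tr => [/(_ isT)|_]; case: tl hx => /=; lia.
Qed.

Lemma good_response_interior (tl tr : bool) L p :
  4 <= p -> p + 4 + tr < L -> exists w, good_response tl tr L p w.
Proof.
move=> le4p ltpL.
have [x /andP[lepx lexp] hx] := residue_in_window (5 + 5 * tl) (p - 4).
exists (x + 4); apply/and4P; split; [lia | lia | by case: tr ltpL => /=; lia |].
have hz : tr -> 0 < L - (x + 5) by case: tr ltpL => //= ltpL _; lia.
rewrite addnA in hx; have := gap_weight_split hx hz.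
by rewrite addnK -addnS subnKC //; lia.
Qed.

Lemma good_response_left (tl tr : bool) L p :
  8 <= L -> p < 4 + tl -> exists w, good_response tl tr L p w.
Proof.
rewrite /good_response /gap_weight => le8L; case: tl => /= ltp.
  by case: (leqP p 1) => lep; [exists 1 | exists 6]; case: tr; lia.
by exists (maxn p 2); case: tr; lia.
Qed.

Lemma exists_good_response (tl tr : bool) L p :
  p < L -> exists w, good_response tl tr L p w.
Proof.
move=> ltpL; have [ltL8|le8L] := ltnP L 8.
  by have /hasP[w _] := good_response_small tl tr ltL8 ltpL; exists w.
have [ltp|lep] := ltnP p (4 + tl); first exact: good_response_left.
have [ltq|leq] := ltnP (L.-1 - p) (4 + tr).
  have [w hw] := good_response_left tl le8L ltq.
  exists (L + 3 - w); rewrite -[p](@subKn p L.-1); last lia.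
  by apply: good_response_rev; first lia.
by apply: good_response_interior; lia.
Qed.

(* The weights of the maximal runs of [false] in [nseq k false ++ s]; the
   first run carries the left flag tl, the last one the right flag tr, and
   all other flags are [true]. *)
Fixpoint gaps_weight (tl : bool) (k : nat) (s : seq bool) (tr : bool) : nat :=
  match s with
  | [::] => gap_weight tl tr k
  | b :: s' => if b then gap_weight tl true k + gaps_weight true 0 s' tr
               else gaps_weight tl k.+1 s' tr
  end.

Lemma gaps_weight_nseq_false m s tl k tr :
  gaps_weight tl k (nseq m false ++ s) tr = gaps_weight tl (k + m) s tr.
Proof. by elim: m k => [|m IH] k /=; rewrite ?addn0 // IH addnS. Qed.

Lemma gaps_weight_run tl tr L : gaps_weight tl 0 (nseq L false) tr = gap_weight tl tr L.
Proof. by rewrite -[nseq L false]cats0 gaps_weight_nseq_false. Qed.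

Lemma gaps_weight_nseq_true m s tr :
  gaps_weight true 0 (nseq m true ++ s) tr = gaps_weight true 0 s tr.
Proof. by elim: m => //= m ->; rewrite gap_weight0. Qed.

Lemma gaps_weight_all_true s tl tr : all id s -> gaps_weight tl 0 s tr = 0.
Proof.
elim: s tl => [|b s IH] tl /=; first by rewrite gap_weight0.
by case/andP=> -> /IH ->; rewrite gap_weight0.
Qed.

Lemma gaps_weight_cat_true s1 s2 tl k tr :
  gaps_weight tl k (s1 ++ true :: s2) tr =
  gaps_weight tl k s1 true + gaps_weight true 0 s2 tr.
Proof. by elim: s1 tl k => [|[] s1 IH] tl k //=; rewrite IH addnA. Qed.

Lemma gaps_weight_split_run tl tr x y z : 0 < y ->
  gaps_weight tl 0 (nseq x false ++ nseq y true ++ nseq z false) tr =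
  gap_weight tl true x + gap_weight true tr z.
Proof.
case: y => // y _.
by rewrite gaps_weight_cat_true gaps_weight_nseq_true !gaps_weight_run.
Qed.

Lemma gaps_weight_frame A g B : last true A -> head true B ->
  gaps_weight false 0 (A ++ g ++ B) false =
  gaps_weight false 0 A true + gaps_weight (A != [::]) 0 g (B != [::]) +
  gaps_weight true 0 B false.
Proof.
have catB tl : head true B ->
    gaps_weight tl 0 (g ++ B) false =
    gaps_weight tl 0 g (B != [::]) + gaps_weight true 0 B false.
  case: B => [_|[] B //= _]; first by rewrite cats0 /= gap_weight0 addn0.
  by rewrite gaps_weight_cat_true gap_weight0.
case/lastP: A => [|A b] /=; first by rewrite gap_weight0 => _ /catB.
rewrite last_rcons => -> /catB hB.
rewrite cat_rcons gaps_weight_cat_true -cats1 gaps_weight_cat_true /=.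
rewrite gap_weight0 addn0 hB addnA.
by case: A.
Qed.

Lemma map_iota_const (T : Type) (g : nat -> T) c m k :
  (forall i, m <= i < m + k -> g i = c) -> [seq g i | i <- iota m k] = nseq k c.
Proof.
elim: k m => [|k IH] m h //=.
rewrite h ?IH // => [i lt_i|]; [apply: h|]; lia.
Qed.

Lemma map_iota_interval a L lo hi : a <= hi.+1 -> lo <= a + L -> lo <= hi.+1 ->
  [seq lo <= i <= hi | i <- iota a L] =
  nseq (lo - a) false ++ nseq (L - (lo - a) - (a + L - hi.+1)) true ++
  nseq (a + L - hi.+1) false.
Proof.
move=> h1 h2 h3.
rewrite {1}(_ : L = lo - a + (L - (lo - a) - (a + L - hi.+1)) + (a + L - hi.+1));
  last lia.
rewrite -addnA !iotaD !map_cat.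
by congr (_ ++ _ ++ _); apply: map_iota_const => i; lia.
Qed.

Lemma first_true_within (P : pred nat) k :
  exists j, [/\ j <= k, forall i, i < j -> ~~ P i & j < k -> P j].
Proof.
have le_jk : find P (iota 0 k) <= k by rewrite -{2}(size_iota 0 k) find_size.
exists (find P (iota 0 k)); split => // [i lt_ij | lt_jk].
  by have := before_find 0 lt_ij; rewrite nth_iota ?(leq_trans lt_ij) // => ->.
have has_P : has P (iota 0 k) by rewrite has_find size_iota.
by have := nth_find 0 has_P; rewrite nth_iota.
Qed.

Lemma maximal_false_run (f : nat -> bool) n v : v < n -> ~~ f v ->
  exists a b, [/\ a <= v < b, b <= n, forall i, a <= i < b -> ~~ f i,
                  0 < a -> f a.-1 & b < n -> f b].
Proof.
move=> lt_vn fv.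
have [l [le_l hl fl]] := first_true_within (fun i => f (v - i)) v.+1.
have [r [le_r hr fr]] := first_true_within (fun i => f (v + i)) (n - v).
have lt0l : 0 < l by case: l fl {hl le_l} => // /(_ isT); rewrite subn0 (negbTE fv).
have lt0r : 0 < r.
  case: r fr {hr le_r} => // fr0; have : f (v + 0) by apply: fr0; lia.
  by rewrite addn0 (negbTE fv).
exists (v.+1 - l), (v + r); split; [lia | lia | | | by move=> lt_bn; apply: fr; lia].
  move=> i /andP[le_i lt_i]; have [le_iv | lt_vi] := leqP i v.
    by have := hl (v - i); rewrite subKn //; apply; lia.
  by have := hr (i - v); rewrite subnKC ?(ltnW lt_vi) //; apply; lia.
by move=> lt0a; rewrite (_ : (v.+1 - l).-1 = v - l); [apply: fl | ]; lia.
Qed.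

Definition dominated_at n (D : {set 'I_n}) (i : nat) : bool :=
  [exists d in D, d - 2 <= i <= d + 2].

Lemma in_cnbhd_path_square n (u v : 'I_n) :
  (u \in cnbhd (path_square_rel n) v) = (v - 2 <= u <= v + 2).
Proof. by rewrite inE /path_square_rel -!val_eqE /=; lia. Qed.

Lemma dominated_by_path_square n (D : {set 'I_n}) (i : 'I_n) :
  (i \in dominated_by (path_square_rel n) D) = dominated_at D i.
Proof.
apply/bigcupP/existsP => [[d dD] | [d /andP[dD near]]].
  by rewrite in_cnbhd_path_square => near; exists d; rewrite dD.
by exists d; rewrite ?in_cnbhd_path_square.
Qed.

Lemma dominated_at_setU1 n (D : {set 'I_n}) (u : 'I_n) i :
  dominated_at (u |: D) i = (u - 2 <= i <= u + 2) || dominated_at D i.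
Proof.
apply/existsP/orP.
  case=> d /andP[/setU1P[-> | dD] near]; [by left | by right; apply/exists_inP; exists d].
case=> [near | /exists_inP[d dD near]].
  by exists u; rewrite setU11.
by exists d; rewrite setU1r.
Qed.

Definition domination_pattern n (D : {set 'I_n}) : seq bool :=
  [seq dominated_at D i | i <- iota 0 n].

Definition potential n (D : {set 'I_n}) : nat :=
  gaps_weight false 0 (domination_pattern D) false.

Lemma potential_set0 n : potential (set0 : {set 'I_n}) = gap_weight false false n.
Proof.
rewrite /potential /domination_pattern (@map_iota_const _ _ false).
  by rewrite gaps_weight_run.
move=> i _.
by apply/existsP => -[d]; rewrite inE.
Qed.

Lemma potential_dominating n (D : {set 'I_n}) :
  dominated_by (path_square_rel n) D = setT -> potential D = 0.
Proof.
move=> domD; rewrite /potential gaps_weight_all_true // all_map.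
apply/allP => i; rewrite mem_iota /= => lt_in.
by rewrite -[i]/(nat_of_ord (Ordinal lt_in)) -dominated_by_path_square domD inE.
Qed.

Section Gap.

Variables (n : nat) (D : {set 'I_n}) (a b : nat).
Hypotheses (lt_ab : a < b) (le_bn : b <= n).
Hypothesis gap_undominated : forall i, a <= i < b -> ~~ dominated_at D i.
Hypothesis gap_left : 0 < a -> dominated_at D a.-1.
Hypothesis gap_right : b < n -> dominated_at D b.

Lemma gap_left_dominator : 0 < a -> exists2 d : 'I_n, d \in D & d + 3 = a.
Proof.
move=> lt0a; have /existsP[d /andP[dD near]] := gap_left lt0a.
have /gap_undominated/exists_inPn/(_ d dD) far : a <= a < b by lia.
by exists d => //; lia.
Qed.

Lemma gap_right_dominator : b < n -> exists2 d : 'I_n, d \in D & d = b + 2 :> nat.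
Proof.
move=> lt_bn; have /existsP[d /andP[dD near]] := gap_right lt_bn.
have /gap_undominated/exists_inPn/(_ d dD) far : a <= b.-1 < b by lia.
by exists d => //; lia.
Qed.

Let before := [seq dominated_at D i | i <- iota 0 a].
Let after := [seq dominated_at D i | i <- iota b (n - b)].
Let outside_weight := gaps_weight false 0 before true + gaps_weight true 0 after false.

Lemma domination_pattern_gap (E : {set 'I_n}) :
  domination_pattern E = [seq dominated_at E i | i <- iota 0 a] ++
    [seq dominated_at E i | i <- iota a (b - a)] ++
    [seq dominated_at E i | i <- iota b (n - b)].
Proof.
rewrite /domination_pattern.
have -> : iota 0 n = iota 0 b ++ iota b (n - b) by rewrite -iotaD subnKC.
have -> : iota 0 b = iota 0 a ++ iota a (b - a) by rewrite -iotaD subnKC // ltnW.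
by rewrite -catA !map_cat.
Qed.

Lemma gaps_weight_around_gap g :
  gaps_weight false 0 (before ++ g ++ after) false =
  outside_weight + gaps_weight (0 < a) 0 g (b < n).
Proof.
rewrite gaps_weight_frame.
- by rewrite -!size_eq0 !size_map !size_iota -lt0n subn_eq0 -ltnNge addnAC.
- rewrite /before; case: a gap_left => [// | a' /(_ isT) la].
  by rewrite -addn1 iotaD map_cat last_cat /= add0n.
- by rewrite /after; case E: (n - b) => [|k] //=; apply: gap_right; lia.
Qed.

Lemma potential_gap : potential D = outside_weight + gap_weight (0 < a) (b < n) (b - a).
Proof.
rewrite /potential domination_pattern_gap.
rewrite (@map_iota_const _ (dominated_at D) false a (b - a)).
  by rewrite gaps_weight_around_gap gaps_weight_run.
by move=> i lt_i; apply/negbTE/gap_undominated; lia.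
Qed.

Lemma potential_move (u : 'I_n) w : u + 2 = a + w -> w < b - a + 4 ->
  potential (u |: D) =
  outside_weight +
  (gap_weight (0 < a) true (w - 4) + gap_weight true (b < n) (b - a - w.+1)).
Proof.
move=> eq_u lt_w.
have unchanged i : i < a \/ b <= i < n -> dominated_at (u |: D) i = dominated_at D i.
  rewrite dominated_at_setU1 => out; apply/orb_idl => near.
  case: out => [lt_ia | /andP[le_bi lt_in]].
    have /gap_left_dominator[d dD ed] : 0 < a by lia.
    by apply/exists_inP; exists d => //; lia.
  have /gap_right_dominator[d dD ed] : b < n by lia.
  by apply/exists_inP; exists d => //; lia.
rewrite /potential domination_pattern_gap.
have -> : [seq dominated_at (u |: D) i | i <- iota 0 a] = before.
  by apply/eq_in_map => i; rewrite mem_iota => /andP[_ lt_ia]; apply: unchanged; left.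
have -> : [seq dominated_at (u |: D) i | i <- iota b (n - b)] = after.
  by apply/eq_in_map => i; rewrite mem_iota subnKC // => lt_i; apply: unchanged; right.
have -> : [seq dominated_at (u |: D) i | i <- iota a (b - a)] =
          [seq u - 2 <= i <= u + 2 | i <- iota a (b - a)].
  apply/eq_in_map => i; rewrite mem_iota (subnKC (ltnW lt_ab)) => lt_i.
  by rewrite dominated_at_setU1 (negbTE (gap_undominated lt_i)) orbF.
rewrite map_iota_interval; [| lia..].
rewrite gaps_weight_around_gap gaps_weight_split_run; last lia.
by congr (_ + (gap_weight _ _ _ + gap_weight _ _ _)); lia.
Qed.

End Gap.

Lemma exists_staller_response n (D : {set 'I_n}) (v : 'I_n) : ~~ dominated_at D v ->
  exists2 u : 'I_n, v - 2 <= u <= v + 2 & potential D <= potential (u |: D) + 1.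
Proof.
move=> undom_v.
have [a [b [/andP[le_av lt_vb] le_bn gap gap_l gap_r]]] :=
  maximal_false_run (ltn_ord v) undom_v.
have lt_ab : a < b by lia.
have lt_p : v - a < b - a by lia.
have [w /and4P[/andP[le_pw le_wp] hl hr hw]] := exists_good_response (0 < a) (b < n) lt_p.
have le2aw : 2 <= a + w.
  case: (posnP a) hl => [-> // | lt0a _].
  by have [d _ ed] := gap_left_dominator lt_ab le_bn gap gap_l gap_r lt0a; lia.
have lt_un : a + w - 2 < n.
  case: (ltnP b n) hr => [lt_bn _ | le_nb le_wL]; last lia.
  have [d _ ed] := gap_right_dominator lt_ab le_bn gap gap_l gap_r lt_bn.
  by have := ltn_ord d; lia.
exists (Ordinal lt_un); first by rewrite /=; lia.
rewrite (potential_gap lt_ab le_bn gap gap_l gap_r).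
by rewrite (potential_move lt_ab le_bn gap gap_l gap_r (u := Ordinal lt_un) (w := w))
  /=; lia.
Qed.

Lemma potential_le_ig_val n k (D : {set 'I_n}) : k <= n ->
  minn k (potential D) <= ig_val (path_square_rel n) k D.
Proof.
elim: k D => [|k IH] D le_kn /=; first by rewrite min0n.
case: ifP => [/eqP/potential_dominating -> | _]; first by rewrite minn0.
apply: (big_ind (fun m => minn k.+1 (potential D) <= m)); first by rewrite card_ord; lia.
  by move=> x y hx hy; rewrite leq_min hx hy.
move=> v; rewrite inE dominated_by_path_square.
case/exists_staller_response=> u near_u hu.
rewrite -in_cnbhd_path_square in near_u.
apply: leq_trans (leq_bigmax_cond _ near_u).
by have := IH (u |: D) (ltnW le_kn); lia.
Qed.

Theorem corollary6p2 (n : nat) (hn : 2 <= n) :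
  3 * (n %/ 8) <= indicated_domination_number (path_square_rel n).
Proof.
rewrite /indicated_domination_number card_ord.
apply: leq_trans (potential_le_ig_val set0 (leqnn n)).
by rewrite potential_set0 /gap_weight; lia.
Qed.
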